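(* Let $G=(V,E)$ be a graph and let $\boldsymbol{\pi}=(\pi_1,\dots,\pi_n)$ be a collection of paths, where $\pi_k=(v_k(0),v_k(1),\dots,v_k(\ell_k))$ for each $k$. Suppose $\boldsymbol{\pi}$ is disentangled. Then for every agent index $i$ and every timestep $t\ge \ell_i$, there exists at least one extension of $\pi_i$ up to timestep $t$, i.e. nodes $v_i(\ell_i+1),\dots,v_i(t)$ (each $v_i(s+1)$ equal to $v_i(s)$ or adjacent to it), such that the collection obtained by replacing $\pi_i$ with $(v_i(0),\dots,v_i(\ell_i),v_i(\ell_i+1),\dots,v_i(t))$ is still disentangled.
   Context: A path of agent $a_k$ is a sequence of nodes $\pi_k=(v_k(0),\dots,v_k(\ell_k))$, where $v_k(s)$ is the node occupied at discrete timestep $s$ and $\ell_k=|\pi_k|-1$; consecutive nodes are equal (staying) or adjacent in $G$; paths may only be extended by appending nodes at the end. Two paths $\pi_i,\pi_j$ with $\ell_i\le \ell_j$ are called disentangled if (1) $v_i(t)\ne v_j(t)$ for all $0\le t\le \ell_i$; (2) $v_i(t)\ne v_j(t-1)$ and $v_i(t-1)\ne v_j(t)$ for all $0<t\le \ell_i$; and (3) $v_i(\ell_i)\ne v_j(t)$ for all $\ell_i+1\le t\le \ell_j$. A collection $\boldsymbol{\pi}$ of paths is disentangled if every pair of its paths is disentangled. *)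

From mathcomp Require Import all_boot.
Set Implicit Arguments. Unset Strict Implicit. Unset Printing Implicit Defensive.

Section Paths.
Variable V : eqType.

(* A path pi = (v(0),...,v(l)) is a nonempty sequence of nodes; v(s) is
   [onth pi s] (= Some v(s) for s <= l). *)
Definition plen (p : seq V) : nat := (size p).-1.

Definition is_path (adj : rel V) (p : seq V) : Prop :=
  match p with
  | [::] => False
  | x :: q => path (fun a b => (a == b) || adj a b) x q
  end.

(* conditions (1)-(3), for l_p <= l_q *)
Definition disentangled_ord (p q : seq V) : Prop :=
  [/\ (forall t, t <= plen p -> onth p t <> onth q t),
      (forall t, 0 < t <= plen p ->
          onth p t <> onth q t.-1 /\ onth p t.-1 <> onth q t)
    & (forall t, plen p < t <= plen q -> onth p (plen p) <> onth q t)].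

Definition disentangled_pair (p q : seq V) : Prop :=
  if plen p <= plen q then disentangled_ord p q else disentangled_ord q p.

Definition disentangled (n : nat) (pis : 'I_n -> seq V) : Prop :=
  forall i j : 'I_n, i != j -> disentangled_pair (pis i) (pis j).

End Paths.

(* Let every agent that has finished its path wait at its last node forever.
   Conditions (1)-(3) then say exactly that these infinite trajectories never
   meet at a node nor swap along an edge: past the end of both paths the two
   positions are frozen, so vertex and swap conflicts there reduce to the
   vertex condition at the last common time.  Disentanglement therefore only
   depends on the trajectories, and extending pi_i by waiting at its last
   node does not change its trajectory. *)

From mathcomp Require Import all_boot.
From mathcomp Require Import zify.

Section Trajectories.
Variable V : eqType.
Implicit Types (p q : seq V) (f g : nat -> option V).

Definition stay p (t : nat) : option V := onth p (minn t (plen p)).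

Lemma stay_le p t : t <= plen p -> stay p t = onth p t.
Proof. by move=> /minn_idPl; rewrite /stay => ->. Qed.

Lemma stay_ge p t : plen p <= t -> stay p t = onth p (plen p).
Proof. by move=> /minn_idPr; rewrite /stay => ->. Qed.

Lemma stay_frozen p s t : plen p <= s <= t -> stay p t = stay p s.
Proof. by move=> /andP[hps hst]; rewrite !stay_ge // (leq_trans hps). Qed.

Lemma stayS p t : plen p <= t -> stay p t.+1 = stay p t.
Proof. by move=> hp; apply: stay_frozen; rewrite hp /=. Qed.

Definition collision_free f g : Prop :=
  forall t, [/\ f t <> g t, f t.+1 <> g t & f t <> g t.+1].

Lemma collision_free_sym f g : collision_free f g -> collision_free g f.
Proof. by move=> cfg t; have [? ? ?] := cfg t; split; apply/nesym. Qed.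

Lemma eq_collision_free f f' g g' :
  f =1 f' -> g =1 g' -> collision_free f g -> collision_free f' g'.
Proof. by move=> ef eg cfg t; rewrite -!ef -!eg. Qed.

Section Ordered.
Variables p q : seq V.
Hypothesis le_pq : plen p <= plen q.

Lemma stay_vertex_free :
  (forall t, t <= plen p -> onth p t <> onth q t) ->
  (forall t, plen p < t <= plen q -> onth p (plen p) <> onth q t) ->
  forall t, stay p t <> stay q t.
Proof.
(* Beyond [plen q] both trajectories are frozen. *)
move=> h1 h3 t; wlog le_tq : t / t <= plen q.
  move=> tle; case: (leqP t (plen q)) => [|/ltnW hqt]; first exact: tle.
  rewrite (@stay_frozen p (plen q)) ?(@stay_frozen q (plen q)); [exact: tle | lia..].
case: (leqP t (plen p)) => htp.
  by rewrite !stay_le; [apply: h1 | lia..].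
by rewrite stay_ge ?stay_le; [apply: h3; lia | lia..].
Qed.

Lemma disentangled_ordE :
  disentangled_ord p q <-> collision_free (stay p) (stay q).
Proof.
split=> [[h1 h2 h3] t|cf].
  have vertex := stay_vertex_free h1 h3.
  case: (leqP t.+1 (plen p)) => htp.
    have [? ?] := h2 t.+1 htp.
    by split; [apply: vertex | rewrite !stay_le; [done | lia..]..].
  split; first exact: vertex.
  - by rewrite stayS //; apply: vertex.
  - by rewrite -stayS //; apply: vertex.
split=> [t htp|[//|t] htp|t /andP[hpt htq]].
- by have [+ _ _] := cf t; rewrite !stay_le; [done | lia..].
- by have [_ + +] := cf t; rewrite !stay_le; [done | lia..].
- by have [+ _ _] := cf t; rewrite stay_ge ?stay_le; [done | lia..].
Qed.

End Ordered.

Lemma disentangled_pairE p q :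
  disentangled_pair p q <-> collision_free (stay p) (stay q).
Proof.
rewrite /disentangled_pair; case: leqP => [/disentangled_ordE //|/ltnW le_qp].
by rewrite disentangled_ordE //; split; apply: collision_free_sym.
Qed.

Lemma disentangled_stay n (pis pis' : 'I_n -> seq V) :
  (forall k, stay (pis k) =1 stay (pis' k)) ->
  disentangled pis -> disentangled pis'.
Proof.
move=> e dis i j ij; apply/disentangled_pairE.
by apply: eq_collision_free (e i) (e j) _; apply/disentangled_pairE/dis.
Qed.

Lemma onth_size_last (a : V) q : onth (a :: q) (size q) = Some (last a q).
Proof. by elim: q a => //= b q IH a; rewrite -IH. Qed.

Lemma stay_cat_wait (a : V) q m :
  stay ((a :: q) ++ nseq m (last a q)) =1 stay (a :: q).
Proof.
move=> t; rewrite /stay /plen size_cat size_nseq onth_cat /=.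
case: ltnP => hk; first by congr onth; lia.
rewrite onth_nseq ifT; last by lia.
by rewrite (minn_idPr _) ?onth_size_last //; lia.
Qed.

Lemma is_path_cat_wait (adj : rel V) (a : V) q m :
  is_path adj (a :: q) -> is_path adj ((a :: q) ++ nseq m (last a q)).
Proof.
rewrite /is_path /= cat_path => -> /=.
by elim: m => //= m ->; rewrite eqxx.
Qed.

End Trajectories.

Theorem proposition3p6 (V : eqType) (adj : rel V)
  (adj_sym : symmetric adj) (adj_irr : irreflexive adj)
  (n : nat) (pis : 'I_n -> seq V)
  (hpaths : forall k, is_path adj (pis k))
  (hdis : disentangled pis) :
  forall (i : 'I_n) (t : nat), plen (pis i) <= t ->
  exists ext : seq V,
    [/\ size (pis i ++ ext) = t.+1,
        is_path adj (pis i ++ ext)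
      & disentangled (fun k => if k == i then pis i ++ ext else pis k)].
Proof.
move=> i t; case E: (pis i) (hpaths i) => [//|a q] hpi ht.
exists (nseq (t - size q) (last a q)); split.
- by rewrite size_cat size_nseq /=; rewrite /plen /= in ht; lia.
- exact: is_path_cat_wait.
- apply: disentangled_stay hdis => k s.
  by case: eqP => [->|//]; rewrite E stay_cat_wait.
Qed.
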